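(* In $D^{2,2,2}$, for every permutation $\{i,j,k\}$ of $\{1,2,3\}$: 1. $a^{ij}_0\supseteq a^{ij}_1\supseteq\cdots\supseteq a^{ij}_n\supseteq\cdots$, and $a^{ij}_n\supseteq x_i+x_j$ for all $n\ge0$; 2. $A^{ij}_0\supseteq A^{ij}_1\supseteq\cdots\supseteq A^{ij}_n\supseteq\cdots$; 3. $x_kA^{ij}_n=x_ka^{ji}_n$ for all $n\ge0$; 4. $A^{ij}_n=y_i+x_ja^{ik}_{n-1}$ for all $n\ge1$; 5. $y_iy_jA^{ki}_n=y_iy_ja^{ik}_n$ for all $n\ge0$; 6. $y_ia^{ij}_{n+1}=y_i(x_i+y_jA^{kj}_n)$ for all $n\ge0$.
   Context: $D^{2,2,2}$ is the modular lattice generated by $x_1,y_1,x_2,y_2,x_3,y_3$ subject only to $x_i\subseteq y_i$ ($i=1,2,3$), with a greatest element $I$ adjoined. Meet is written $ab$, join $a+b$, order $\subseteq$. Atomic elements: for distinct $i,j$, let $k$ denote the third index. Define - $a^{ij}_0=I$ and $a^{ij}_n=x_i+y_ja^{jk}_{n-1}$ for $n\ge1$; - $A^{ij}_0=I$ and $A^{ij}_n=y_i+x_jA^{ki}_{n-1}$ for $n\ge1$. *)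

From HB Require Import structures.
From mathcomp Require Import all_boot all_order.
Set Implicit Arguments. Unset Strict Implicit. Unset Printing Implicit Defensive.
Import Order.TTheory.
Local Open Scope order_scope.

Definition modular_lattice {d} (L : latticeType d) : Prop :=
  forall a b c : L, a <= c -> a `|` (b `&` c) = (a `|` b) `&` c.

(* For distinct i j in {0,1,2}, the third index k. *)
Definition third (i j : 'I_3) : 'I_3 := inord (3 - i - j).

Section Atomic.
Context {d : Order.disp_t} {L : tLatticeType d} (x y : 'I_3 -> L).

Fixpoint a_at (n : nat) (i j : 'I_3) : L :=
  match n with
  | 0 => \top
  | n'.+1 => x i `|` (y j `&` a_at n' j (third i j))
  end.

Fixpoint A_at (n : nat) (i j : 'I_3) : L :=
  match n with
  | 0 => \top
  | n'.+1 => y i `|` (x j `&` A_at n' (third i j) i)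
  end.
End Atomic.

(* Two consequences of modularity do the work: for
   [p <= q] one has [q ∧ (p ∨ t) = p ∨ (q ∧ t)], which lets a meet with [y_i]
   pass the summand [x_i]; and below any [w], [u ∨ (v ∧ w)] and [v ∨ (u ∧ w)]
   cannot be told apart, since both meet [w] in [(u ∧ w) ∨ (v ∧ w)]. The latter
   exchanges the roles of the [x]'s and [y]'s inside the recursions, turning
   [A] into [a] once the meet with [x_k] (item 3) or with [y_i y_j] (item 5)
   is taken; items 4 and 6 are these identities pushed through one unfolding. *)
From HB Require Import structures.
From mathcomp Require Import all_boot all_order.
Set Implicit Arguments.
Unset Strict Implicit.
Unset Printing Implicit Defensive.
Import Order.TTheory.
Local Open Scope order_scope.

Lemma thirdC (i j : 'I_3) : third j i = third i j.
Proof. by rewrite /third subnAC. Qed.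

Lemma third_neql (i j : 'I_3) : i != j -> third i j != i.
Proof.
case: i j => [[|[|[|m]]] hi] [[|[|[|n]]] hj] //= _.
all: by rewrite /third /= -val_eqE /= inordK.
Qed.

Lemma third_neqr (i j : 'I_3) : i != j -> third i j != j.
Proof. by rewrite eq_sym thirdC; apply: third_neql. Qed.

Lemma third_thirdl (i j : 'I_3) : i != j -> third i (third i j) = j.
Proof.
case: i j => [[|[|[|m]]] hi] [[|[|[|n]]] hj] //= _.
all: by apply: val_inj; rewrite /third /= inordK //= inordK.
Qed.

Lemma third_thirdlC (i j : 'I_3) : i != j -> third (third i j) i = j.
Proof. by rewrite thirdC; apply: third_thirdl. Qed.

Section ModularLattice.
Variables (d : Order.disp_t) (L : latticeType d).
Hypothesis Lmod : modular_lattice L.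

Lemma modular_meetU (p q t : L) : p <= q -> q `&` (p `|` t) = p `|` (q `&` t).
Proof. by move=> le_pq; rewrite meetC (meetC q t) Lmod. Qed.

Lemma meet_joinI_swap (z w u v : L) : z <= w ->
  z `&` (u `|` (v `&` w)) = z `&` (v `|` (u `&` w)).
Proof.
move=> /meet_idPl <-.
have meet_w (p q : L) : w `&` (p `|` (q `&` w)) = (q `&` w) `|` (p `&` w).
  by rewrite joinC modular_meetU ?leIr // (meetC w p).
by rewrite -!meetA !meet_w joinC.
Qed.

End ModularLattice.

Section AtomicElements.
Variables (d : Order.disp_t) (L : tLatticeType d) (x y : 'I_3 -> L).
Hypothesis Lmod : modular_lattice L.
Hypothesis le_xy : forall i, x i <= y i.

Local Notation a := (a_at x y).
Local Notation A := (A_at x y).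

Lemma a_atS_le n p q : a n.+1 p q <= a n p q.
Proof.
elim: n p q => [|n IHn] p q; first exact: lex1.
by apply: leU2 => //; apply: leI2 => //; apply: IHn.
Qed.

Lemma A_atS_le n p q : A n.+1 p q <= A n p q.
Proof.
elim: n p q => [|n IHn] p q; first exact: lex1.
by apply: leU2 => //; apply: leI2 => //; apply: IHn.
Qed.

Lemma y_le_A_at n p q : y p <= A n p q.
Proof. by case: n => [|n]; [exact: lex1 | exact: leUl]. Qed.

Lemma join_x_le_a_at n p q : p != q -> x p `|` x q <= a n p q.
Proof.
elim: n p q => [|n IHn] p q neq_pq; first exact: lex1.
rewrite /= leUx leUl /= (le_trans _ (leUr _ _)) // lexI le_xy /=.
by rewrite (le_trans (leUl _ (x (third p q)))) // IHn // eq_sym third_neqr.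
Qed.

Lemma meet_x_third_A_at n p q : p != q ->
  x (third p q) `&` A n p q = x (third p q) `&` a n q p.
Proof.
elim: n p q => [|n IHn] p q neq_pq //=.
have := IHn _ _ (third_neql neq_pq); rewrite third_thirdlC // => ->.
rewrite thirdC (meet_joinI_swap Lmod) //.
apply: le_trans (leUr _ (x p)) (join_x_le_a_at _ _).
by rewrite eq_sym third_neqr // eq_sym.
Qed.

Lemma A_atS_E n p q : p != q -> A n.+1 p q = y p `|` (x q `&` a n p (third p q)).
Proof.
move=> neq_pq /=; congr (_ `|` _).
have := meet_x_third_A_at n (third_neql neq_pq).
by rewrite third_thirdlC.
Qed.

Lemma meet_yy_A_at n p q : p != q ->
  (y p `&` y q) `&` A n (third p q) p = (y p `&` y q) `&` a n p (third p q).
Proof.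
elim: n p q => [|n IHn] p q neq_pq //=.
set r := third p q; have neq_rp : r != p := third_neql neq_pq.
have IH_rp := IHn r p neq_rp; rewrite third_thirdlC // in IH_rp.
rewrite third_thirdlC // third_thirdl // (meet_joinI_swap Lmod); last first.
  by rewrite (le_trans (leIr _ _)) // y_le_A_at.
rewrite (meetC (y p)) -!meetA !(modular_meetU Lmod _ (le_xy p)).
by rewrite !(meetA (y p) (y r)) (meetC (y p)) IH_rp.
Qed.

Lemma meet_y_a_atS n p q : p != q ->
  y p `&` a n.+1 p q = y p `&` (x p `|` (y q `&` A n (third p q) q)).
Proof.
move=> neq_pq /=; rewrite !(modular_meetU Lmod _ (le_xy p)).
rewrite !(meetA (y p) (y q)) (meetC (y p)) -(thirdC p).
by rewrite meet_yy_A_at // eq_sym.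
Qed.

End AtomicElements.

Theorem mainTheorem7 (d : Order.disp_t) (L : tLatticeType d)
  (Lmod : modular_lattice L) (x y : 'I_3 -> L)
  (hxy : forall i, x i <= y i) (i j : 'I_3) (hij : i != j) :
  let k := third i j in
  let a := a_at x y in
  let A := A_at x y in
  ((forall n, a n.+1 i j <= a n i j) /\ (forall n, x i `|` x j <= a n i j)) /\
  (forall n, A n.+1 i j <= A n i j) /\
  (forall n, x k `&` A n i j = x k `&` a n j i) /\
  (forall n, A n.+1 i j = y i `|` (x j `&` a n i k)) /\
  (forall n, (y i `&` y j) `&` A n k i = (y i `&` y j) `&` a n i k) /\
  (forall n, y i `&` a n.+1 i j = y i `&` (x i `|` (y j `&` A n k j))).
Proof.
move=> k a A.
split; [split | do 4?split] => n.
- exact: a_atS_le.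
- exact: join_x_le_a_at.
- exact: A_atS_le.
- exact: meet_x_third_A_at.
- exact: A_atS_E.
- exact: meet_yy_A_at.
- exact: meet_y_a_atS.
Qed.
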